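(* Let $\mathbb{P}$ be a class of closed formulas, and let $P$ be a proof in $\mathbf{FBPI}^{\mathbb{P}}$ of a safety problem $\Pi$. Then $\operatorname{Inv}_{\mathrm{pro}}^\rightleftharpoons(P)$ is a safe inductive invariant of $\Pi$, and if $P$ contains $n\in\mathbb{N}$ instances of the rule (Ind) and every predicate in $\mathbb{P}$ has quantification depth at most $d$, then $\operatorname{Inv}_{\mathrm{pro}}^\rightleftharpoons(P)$ has quantification depth at most $n\cdot d$.
   Context: A first-order vocabulary $\Sigma$ consists of constant, function and relation symbols; $\Sigma'=\{a' : a\in\Sigma\}$ is a disjoint copy, and for a formula $\varphi$, $\varphi'$ denotes $\varphi$ with every vocabulary symbol replaced by its primed copy. A safety problem over $\Sigma$ is a triple $(\iota,\tau,\beta)$, where $\iota,\beta$ are closed formulas over $\Sigma$ and $\tau$ is a closed formula over $\Sigma\uplus\Sigma'$. $A\Rightarrow B$ means the implication $A\to B$ is valid; $\tau^{-1}$ is $\tau$ with each symbol and its primed counterpart swapped. A closed formula $\varphi$ over $\Sigma$ is a safe inductive invariant of $(\iota,\tau,\beta)$ if $\iota\Rightarrow\varphi$, $\varphi\wedge\tau\Rightarrow\varphi'$ and $\varphi\Rightarrow\neg\beta$. Quantification depth is the maximal nesting depth of quantifiers. Proofs: a proof of $\Pi$ in a system is a finite tree whose nodes are safety problems (possibly over different vocabularies), whose root is $\Pi$, and in which each node together with its children is an instance of one of the system's rules, with side conditions valid. $\mathbf{FBPI}$ has the rules (for problems over $\Sigma$, $\varphi$ ranging over closed formulas over $\Sigma$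 in the first four): (Ind): no premises; conclusion $(\iota,\tau,\neg\varphi)$; side conditions $\iota\Rightarrow\varphi$ and $\varphi\wedge\tau\Rightarrow\varphi'$. (Cons): premise $(\iota,\tau,\neg\varphi)$; conclusion $(\iota,\tau,\beta)$; side condition $\varphi\Rightarrow\neg\beta$. (Inc): premises $(\iota,\tau,\neg\varphi)$ and $(\iota\wedge\varphi,\ \tau\wedge\varphi\wedge\varphi',\ \beta\wedge\varphi)$; conclusion $(\iota,\tau,\beta)$. (Rev): premise $(\beta,\tau^{-1},\iota)$; conclusion $(\iota,\tau,\beta)$. (Proph): for $\Pi=(\iota,\tau,\beta)$ over $\Sigma$, a fresh constant symbol $w$, a fresh unary relation symbol $m$, and a formula $\varphi(x)$ over $\Sigma$ with free variable $x$: premises $\Pi^{\mathrm{sound}}_\varphi$ and $\Pi^w_\varphi$; conclusion $\Pi$, where $\varphi(w)$ is $\varphi$ with $x$ replaced by $w$, $\Pi^w_\varphi=\big(\iota\wedge\varphi(w),\ \varphi(w)\wedge\tau\wedge w'=w\wedge(\varphi(w))',\ \beta\wedge\varphi(w)\big)$ over $\Sigma\cup\{w\}$, and $\Pi^{\mathrm{sound}}_\varphi=\big(\iota\wedge\forall x.\,\varphi(x)\to m(x),\ \tau\wedge\forall x.\,(m(x)\wedge\varphi(x)\wedge\varphi'(x))\to m'(x),\ \beta\wedge\forall x.\,\varphi(x)\to\neg m(x)\big)$ over $\Sigma\cup\{m\}$. $\mathbf{FBPI}^{\mathbb{P}}$ is $\mathbf{FBPI}$ with applications of (Ind) restricted to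 $\varphi\in\mathbb{P}$. $\operatorname{Inv}_{\mathrm{pro}}^\rightleftharpoons(P)$ is defined by induction on $P$: if the root is the conclusion $(\iota,\tau,\neg\varphi)$ of (Ind), it is $\varphi$; for (Cons) with premise proof $\tilde P$ it is $\operatorname{Inv}_{\mathrm{pro}}^\rightleftharpoons(\tilde P)$; for (Inc) with premise proofs $P_1,P_2$ it is the conjunction of the two; for (Rev) with premise proof $\tilde P$ it is $\neg\operatorname{Inv}_{\mathrm{pro}}^\rightleftharpoons(\tilde P)$; for (Proph) with premise proofs $P_{\mathrm{sound}}$ of $\Pi^{\mathrm{sound}}_\varphi$ and $P_w$ of $\Pi^w_\varphi$, letting $\xi=\operatorname{Inv}_{\mathrm{pro}}^\rightleftharpoons(P_{\mathrm{sound}})$ and $\psi=\operatorname{Inv}_{\mathrm{pro}}^\rightleftharpoons(P_w)$ (with distinct bound variables), it is $\xi[\psi/m]$: the formula obtained from $\xi$ by replacing every atom $m(t)$, for any term $t$, by $\psi[t/w]$. *)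

From Stdlib Require Import List Arith Bool.
Import ListNotations.

(* Symbols: a base name together with a "primed" flag; the primed copy
   a' of a symbol a is the same name with the flag set.               *)
Record sym := Sym { sname : nat; sprimed : bool }.

Definition sym_eqb (s t : sym) : bool :=
  Nat.eqb (sname s) (sname t) && Bool.eqb (sprimed s) (sprimed t).

Inductive kind := KFun (n : nat) | KRel (n : nat).

Definition vocab := nat -> option kind.

Definition vext (S : vocab) (a : nat) (k : kind) : vocab :=
  fun n => if Nat.eqb n a then Some k else S n.

(* Terms and formulas, variables as de Bruijn indices.               *)
Inductive term := Var (n : nat) | App (f : sym) (ts : list term).

Inductive formula :=
| FFalse | FTrue
| Eq (t u : term)
| Rel (r : sym) (ts : list term)
| Not (a : formula)
| And (a b : formula)
| Or (a b : formula)
| Imp (a b : formula)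
| Forall (a : formula)
| Exists (a : formula).

Fixpoint wf_term (okf : sym -> nat -> Prop) (k : nat) (t : term) : Prop :=
  match t with
  | Var n => n < k
  | App f ts => okf f (length ts) /\ fold_right and True (map (wf_term okf k) ts)
  end.

Fixpoint wf_formula (okf okr : sym -> nat -> Prop) (k : nat) (p : formula) : Prop :=
  match p with
  | FFalse | FTrue => True
  | Eq t u => wf_term okf k t /\ wf_term okf k u
  | Rel r ts => okr r (length ts) /\ fold_right and True (map (wf_term okf k) ts)
  | Not a => wf_formula okf okr k a
  | And a b | Or a b | Imp a b => wf_formula okf okr k a /\ wf_formula okf okr k b
  | Forall a | Exists a => wf_formula okf okr (S k) a
  end.

(* Symbols of Sigma (allow_primed = false) or of Sigma ⊎ Sigma' (true). *)
Definition okf_of (S : vocab) (allow_primed : bool) (s : sym) (n : nat) : Prop :=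
  S (sname s) = Some (KFun n) /\ (sprimed s = false \/ allow_primed = true).
Definition okr_of (S : vocab) (allow_primed : bool) (s : sym) (n : nat) : Prop :=
  S (sname s) = Some (KRel n) /\ (sprimed s = false \/ allow_primed = true).

Definition formula_over (S : vocab) (allow_primed : bool) (k : nat) (p : formula) :=
  wf_formula (okf_of S allow_primed) (okr_of S allow_primed) k p.

Definition closed_over (S : vocab) (p : formula) := formula_over S false 0 p.
Definition closed_over2 (S : vocab) (p : formula) := formula_over S true 0 p.

Definition closed (p : formula) :=
  wf_formula (fun _ _ => True) (fun _ _ => True) 0 p.

Fixpoint rename_term (g : sym -> sym) (t : term) : term :=
  match t with
  | Var n => Var n
  | App f ts => App (g f) (map (rename_term g) ts)
  end.

Fixpoint rename (g : sym -> sym) (p : formula) : formula :=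
  match p with
  | FFalse => FFalse | FTrue => FTrue
  | Eq t u => Eq (rename_term g t) (rename_term g u)
  | Rel r ts => Rel (g r) (map (rename_term g) ts)
  | Not a => Not (rename g a)
  | And a b => And (rename g a) (rename g b)
  | Or a b => Or (rename g a) (rename g b)
  | Imp a b => Imp (rename g a) (rename g b)
  | Forall a => Forall (rename g a)
  | Exists a => Exists (rename g a)
  end.

Definition prime (p : formula) : formula :=
  rename (fun s => Sym (sname s) true) p.

(* tau^{-1} : each symbol and its primed counterpart swapped *)
Definition swap (p : formula) : formula :=
  rename (fun s => Sym (sname s) (negb (sprimed s))) p.

Fixpoint shift_term (c : nat) (t : term) : term :=
  match t with
  | Var n => if n <? c then Var n else Var (S n)
  | App f ts => App f (map (shift_term c) ts)
  end.

(* instantiate de Bruijn index k (under k binders) by u, lowering the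
   larger indices; u is given relative to the outer context. *)
Fixpoint inst_term (k : nat) (u : term) (t : term) : term :=
  match t with
  | Var n => if n =? k then u else if n <? k then Var n else Var (pred n)
  | App f ts => App f (map (inst_term k u) ts)
  end.

Fixpoint inst (k : nat) (u : term) (p : formula) : formula :=
  match p with
  | FFalse => FFalse | FTrue => FTrue
  | Eq t v => Eq (inst_term k u t) (inst_term k u v)
  | Rel r ts => Rel r (map (inst_term k u) ts)
  | Not a => Not (inst k u a)
  | And a b => And (inst k u a) (inst k u b)
  | Or a b => Or (inst k u a) (inst k u b)
  | Imp a b => Imp (inst k u a) (inst k u b)
  | Forall a => Forall (inst (S k) (shift_term 0 u) a)
  | Exists a => Exists (inst (S k) (shift_term 0 u) a)
  end.

Definition cst (w : nat) : term := App (Sym w false) [].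

(* phi(w): the formula phi(x) (x = de Bruijn index 0) with x replaced by w *)
Definition at_const (p : formula) (w : nat) : formula := inst 0 (cst w) p.

Fixpoint csubst_term (w : nat) (u : term) (t : term) : term :=
  match t with
  | Var n => Var n
  | App f ts =>
      if sym_eqb f (Sym w false) && (length ts =? 0) then u
      else App f (map (csubst_term w u) ts)
  end.

Fixpoint csubst (w : nat) (u : term) (p : formula) : formula :=
  match p with
  | FFalse => FFalse | FTrue => FTrue
  | Eq t v => Eq (csubst_term w u t) (csubst_term w u v)
  | Rel r ts => Rel r (map (csubst_term w u) ts)
  | Not a => Not (csubst w u a)
  | And a b => And (csubst w u a) (csubst w u b)
  | Or a b => Or (csubst w u a) (csubst w u b)
  | Imp a b => Imp (csubst w u a) (csubst w u b)
  | Forall a => Forall (csubst w (shift_term 0 u) a)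
  | Exists a => Exists (csubst w (shift_term 0 u) a)
  end.

(* xi[psi/m]: replace every atom m(t) of xi by psi[t/w] *)
Fixpoint rsubst (m w : nat) (psi : formula) (p : formula) : formula :=
  match p with
  | FFalse => FFalse | FTrue => FTrue
  | Eq t v => Eq t v
  | Rel r ts =>
      match ts with
      | [t] => if sym_eqb r (Sym m false) then csubst w t psi else Rel r ts
      | _ => Rel r ts
      end
  | Not a => Not (rsubst m w psi a)
  | And a b => And (rsubst m w psi a) (rsubst m w psi b)
  | Or a b => Or (rsubst m w psi a) (rsubst m w psi b)
  | Imp a b => Imp (rsubst m w psi a) (rsubst m w psi b)
  | Forall a => Forall (rsubst m w psi a)
  | Exists a => Exists (rsubst m w psi a)
  end.

Definition scons {D : Type} (d : D) (e : nat -> D) : nat -> D :=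
  fun n => match n with 0 => d | S n' => e n' end.

Fixpoint eval_term {D : Type} (F : sym -> list D -> D) (e : nat -> D) (t : term) : D :=
  match t with
  | Var n => e n
  | App f ts => F f (map (eval_term F e) ts)
  end.

Fixpoint sat {D : Type} (F : sym -> list D -> D) (R : sym -> list D -> Prop)
    (e : nat -> D) (p : formula) : Prop :=
  match p with
  | FFalse => False
  | FTrue => True
  | Eq t u => eval_term F e t = eval_term F e u
  | Rel r ts => R r (map (eval_term F e) ts)
  | Not a => ~ sat F R e a
  | And a b => sat F R e a /\ sat F R e b
  | Or a b => sat F R e a \/ sat F R e b
  | Imp a b => sat F R e a -> sat F R e b
  | Forall a => forall d : D, sat F R (scons d e) a
  | Exists a => exists d : D, sat F R (scons d e) a
  end.

(* valid: true in every structure (nonempty domain D -- inhabited via the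
   assignment e -- and every interpretation of the symbols). *)
Definition valid (p : formula) : Prop :=
  forall (D : Type) (F : sym -> list D -> D) (R : sym -> list D -> Prop)
         (e : nat -> D), sat F R e p.

Definition entails (a b : formula) : Prop := valid (Imp a b).

Fixpoint qdepth (p : formula) : nat :=
  match p with
  | FFalse | FTrue | Eq _ _ | Rel _ _ => 0
  | Not a => qdepth a
  | And a b | Or a b | Imp a b => Nat.max (qdepth a) (qdepth b)
  | Forall a | Exists a => S (qdepth a)
  end.

Record problem := Problem { iota : formula; tau : formula; beta : formula }.

Definition safety_problem (S : vocab) (P : problem) : Prop :=
  closed_over S (iota P) /\ closed_over2 S (tau P) /\ closed_over S (beta P).

Definition safe_inductive_invariant (S : vocab) (P : problem) (phi : formula) : Prop :=
  closed_over S phi /\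
  entails (iota P) phi /\
  entails (And phi (tau P)) (prime phi) /\
  entails phi (Not (beta P)).

Definition proph_w (P : problem) (w : nat) (phi : formula) : problem :=
  let pw := at_const phi w in
  Problem (And (iota P) pw)
          (And pw (And (tau P) (And (Eq (App (Sym w true) []) (cst w)) (prime pw))))
          (And (beta P) pw).

Definition mx (m : nat) (primed : bool) : formula := Rel (Sym m primed) [Var 0].

Definition proph_sound (P : problem) (m : nat) (phi : formula) : problem :=
  Problem (And (iota P) (Forall (Imp phi (mx m false))))
          (And (tau P) (Forall (Imp (And (mx m false) (And phi (prime phi))) (mx m true))))
          (And (beta P) (Forall (Imp phi (Not (mx m false))))).

Inductive fbpi (PP : formula -> Prop) : vocab -> problem -> Type :=
| RInd (S : vocab) (i t phi : formula) :
    safety_problem S (Problem i t (Not phi)) ->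
    PP phi ->
    entails i phi ->
    entails (And phi t) (prime phi) ->
    fbpi PP S (Problem i t (Not phi))
| RCons (S : vocab) (i t b phi : formula) :
    safety_problem S (Problem i t b) ->
    closed_over S phi ->
    entails phi (Not b) ->
    fbpi PP S (Problem i t (Not phi)) ->
    fbpi PP S (Problem i t b)
| RInc (S : vocab) (i t b phi : formula) :
    safety_problem S (Problem i t b) ->
    closed_over S phi ->
    fbpi PP S (Problem i t (Not phi)) ->
    fbpi PP S (Problem (And i phi) (And t (And phi (prime phi))) (And b phi)) ->
    fbpi PP S (Problem i t b)
| RRev (S : vocab) (i t b : formula) :
    safety_problem S (Problem i t b) ->
    fbpi PP S (Problem b (swap t) i) ->
    fbpi PP S (Problem i t b)
| RProph (S : vocab) (P : problem) (w m : nat) (phi : formula) :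
    safety_problem S P ->
    S w = None ->
    S m = None ->
    formula_over S false 1 phi ->      (* phi(x) over Sigma, free var x = index 0 *)
    fbpi PP (vext S m (KRel 1)) (proph_sound P m phi) ->
    fbpi PP (vext S w (KFun 0)) (proph_w P w phi) ->
    fbpi PP S P.

Arguments RInd {PP}. Arguments RCons {PP}. Arguments RInc {PP}.
Arguments RRev {PP}. Arguments RProph {PP}.

Fixpoint inv_pro {PP : formula -> Prop} {S : vocab} {Pi : problem}
    (P : fbpi PP S Pi) : formula :=
  match P with
  | RInd _ _ _ phi _ _ _ _ => phi
  | RCons _ _ _ _ _ _ _ _ P1 => inv_pro P1
  | RInc _ _ _ _ _ _ _ P1 P2 => And (inv_pro P1) (inv_pro P2)
  | RRev _ _ _ _ _ P1 => Not (inv_pro P1)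
  | RProph _ _ w m _ _ _ _ _ Ps Pw => rsubst m w (inv_pro Pw) (inv_pro Ps)
  end.

Fixpoint count_ind {PP : formula -> Prop} {S : vocab} {Pi : problem}
    (P : fbpi PP S Pi) : nat :=
  match P with
  | RInd _ _ _ _ _ _ _ _ => 1
  | RCons _ _ _ _ _ _ _ _ P1 => count_ind P1
  | RInc _ _ _ _ _ _ _ P1 P2 => count_ind P1 + count_ind P2
  | RRev _ _ _ _ _ P1 => count_ind P1
  | RProph _ _ _ _ _ _ _ _ _ Ps Pw => count_ind Ps + count_ind Pw
  end.

From Stdlib Require Import List Arith Bool Lia Classical.
Import ListNotations.

(* For (Rev), priming and swapping agree on
   formulas over Sigma, so consecution of xi for tau^-1, read in the structure
   with primed and unprimed symbols exchanged, is consecution of ~xi for tau.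
   For (Proph), xi[psi/m] holds in a structure exactly when xi holds once m is
   interpreted as {d | psi holds with w := d}.  Interpreting m this way in the
   current state and m' in the next one turns initiation, consecution and
   safety of xi for the soundness premise into those of xi[psi/m]; the
   remaining step m(d) /\ phi(d) /\ phi'(d) -> m'(d) is consecution of psi
   with both w and w' interpreted as d.  The depth bound holds because
   replacing atoms by instances of psi adds at most the depth of psi. *)

Definition term_nested_ind (P : term -> Prop)
    (HVar : forall n, P (Var n))
    (HApp : forall f ts, Forall P ts -> P (App f ts)) : forall t, P t :=
  fix go t :=
    match t with
    | Var n => HVar n
    | App f ts =>
        HApp f ts ((fix go_list l : Forall P l :=
                      match l with
                      | [] => Forall_nil P
                      | u :: l' => Forall_cons u (go u) (go_list l')
                      end) ts)
    end.

Lemma fold_and_Forall {A : Type} (P : A -> Prop) (l : list A) :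
  fold_right and True (map P l) <-> Forall P l.
Proof.
  induction l as [|x l IH]; simpl; split.
  - constructor.
  - trivial.
  - intros [Hx Hl]. constructor; tauto.
  - intros Hl. inversion Hl; subst. tauto.
Qed.

Section Coincidence.

Variables (okf okr : sym -> nat -> Prop) (D : Type).
Variables (F F' : sym -> list D -> D) (R R' : sym -> list D -> Prop).
Hypothesis HF : forall f ds, okf f (length ds) -> F f ds = F' f ds.
Hypothesis HR : forall r ds, okr r (length ds) -> (R r ds <-> R' r ds).

Lemma eval_term_agree (k : nat) (t : term) (e e' : nat -> D) :
  wf_term okf k t -> (forall i, i < k -> e i = e' i) ->
  eval_term F e t = eval_term F' e' t.
Proof.
  intros Hwf He. induction t as [n|f ts IH] using term_nested_ind; simpl in *.
  - auto.
  - destruct Hwf as [Hf Hts]. apply fold_and_Forall in Hts.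
    assert (Hmap : map (eval_term F e) ts = map (eval_term F' e') ts).
    { apply map_ext_Forall. rewrite Forall_forall in IH, Hts |- *. auto. }
    rewrite Hmap. apply HF. now rewrite length_map.
Qed.

Lemma sat_agree (p : formula) : forall (k : nat) (e e' : nat -> D),
  wf_formula okf okr k p -> (forall i, i < k -> e i = e' i) ->
  (sat F R e p <-> sat F' R' e' p).
Proof.
  induction p; intros k e e' Hwf He; simpl in *;
    try (destruct Hwf; now rewrite (IHp1 k e e'), (IHp2 k e e')).
  6-7: enough (Hd : forall d, sat F R (scons d e) p <-> sat F' R' (scons d e') p)
        by (now setoid_rewrite Hd);
        intros d; apply (IHp (S k)); trivial; intros [|j] Hj; simpl; auto with arith.
  - reflexivity.
  - reflexivity.
  - destruct Hwf as [Ht Hu].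
    now rewrite (eval_term_agree k t e e'), (eval_term_agree k u e e').
  - destruct Hwf as [Hr Hts]. apply fold_and_Forall in Hts.
    assert (Hmap : map (eval_term F e) ts = map (eval_term F' e') ts).
    { apply map_ext_Forall. rewrite Forall_forall in Hts |- *.
      eauto using eval_term_agree. }
    rewrite Hmap. apply HR. now rewrite length_map.
  - now rewrite (IHp k e e').
Qed.

End Coincidence.

Definition upd_fun {D : Type} (F : sym -> list D -> D) (s : sym) (d : D) :
    sym -> list D -> D :=
  fun f ds => if sym_eqb f s && (length ds =? 0) then d else F f ds.

Definition upd_rel {D : Type} (R : sym -> list D -> Prop) (s : sym) (M : D -> Prop) :
    sym -> list D -> Prop :=
  fun r ds => if sym_eqb r s then match ds with [d] => M d | _ => R r ds end else R r ds.

Lemma sym_eqb_refl (s : sym) : sym_eqb s s = true.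
Proof. destruct s as [a []]; unfold sym_eqb; simpl; now rewrite Nat.eqb_refl. Qed.

Lemma sym_eqb_sname_neq (f : sym) (a : nat) (c : bool) :
  sname f <> a -> sym_eqb f (Sym a c) = false.
Proof. intros H. unfold sym_eqb; simpl. now apply Nat.eqb_neq in H as ->. Qed.

Lemma sym_eqb_sprimed_neq (f : sym) (a : nat) (c : bool) :
  sprimed f <> c -> sym_eqb f (Sym a c) = false.
Proof.
  intros H. unfold sym_eqb; simpl.
  destruct (sprimed f), c; try congruence; apply andb_false_r.
Qed.

Lemma upd_fun_same {D : Type} (F : sym -> list D -> D) s d : upd_fun F s d s [] = d.
Proof. unfold upd_fun. now rewrite sym_eqb_refl. Qed.

Lemma upd_fun_other {D : Type} (F : sym -> list D -> D) s d f ds :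
  sym_eqb f s = false -> upd_fun F s d f ds = F f ds.
Proof. unfold upd_fun. now intros ->. Qed.

Lemma upd_rel_same {D : Type} (R : sym -> list D -> Prop) s M d : upd_rel R s M s [d] = M d.
Proof. unfold upd_rel. now rewrite sym_eqb_refl. Qed.

Lemma upd_rel_other {D : Type} (R : sym -> list D -> Prop) s M r ds :
  sym_eqb r s = false -> upd_rel R s M r ds = R r ds.
Proof. unfold upd_rel. now intros ->. Qed.

Section Semantics.

Variables (D : Type) (F : sym -> list D -> D) (R : sym -> list D -> Prop).

Lemma eval_rename_term (g : sym -> sym) (e : nat -> D) (t : term) :
  eval_term F e (rename_term g t) = eval_term (fun s => F (g s)) e t.
Proof.
  induction t as [n|f ts IH] using term_nested_ind; simpl; trivial.
  rewrite map_map. f_equal. now apply map_ext_Forall.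
Qed.

Lemma sat_rename (g : sym -> sym) (p : formula) : forall e : nat -> D,
  sat F R e (rename g p) <-> sat (fun s => F (g s)) (fun s => R (g s)) e p.
Proof.
  induction p; intros e; simpl; try setoid_rewrite IHp;
    try rewrite IHp1, IHp2; try reflexivity.
  - now rewrite !eval_rename_term.
  - rewrite map_map. erewrite map_ext; [reflexivity|]. apply eval_rename_term.
Qed.

Lemma eval_shift_term0 (d : D) (e : nat -> D) (u : term) :
  eval_term F (scons d e) (shift_term 0 u) = eval_term F e u.
Proof.
  induction u as [n|f ts IH] using term_nested_ind; simpl; trivial.
  rewrite map_map. f_equal. now apply map_ext_Forall.
Qed.

Lemma eval_csubst_term (w : nat) (u : term) (e : nat -> D) (t : term) :
  eval_term F e (csubst_term w u t) =
  eval_term (upd_fun F (Sym w false) (eval_term F e u)) e t.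
Proof.
  induction t as [n|f ts IH] using term_nested_ind; simpl; trivial.
  unfold upd_fun at 1. rewrite length_map.
  destruct (sym_eqb f (Sym w false) && (length ts =? 0)); trivial.
  simpl. rewrite map_map. f_equal. now apply map_ext_Forall.
Qed.

Lemma sat_csubst (w : nat) (p : formula) : forall (v : term) (e : nat -> D),
  sat F R e (csubst w v p) <-> sat (upd_fun F (Sym w false) (eval_term F e v)) R e p.
Proof.
  induction p; intros v e; simpl; try setoid_rewrite IHp;
    try setoid_rewrite eval_shift_term0; try rewrite IHp1, IHp2; try reflexivity.
  - now rewrite !eval_csubst_term.
  - rewrite map_map. erewrite map_ext; [reflexivity|]. apply eval_csubst_term.
Qed.

Definition inst_env (k : nat) (x : D) (e : nat -> D) : nat -> D :=
  fun n => if n =? k then x else if n <? k then e n else e (pred n).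

Lemma eval_inst_term (k : nat) (v : term) (e e' : nat -> D) (t : term) :
  (forall n, e' n = inst_env k (eval_term F e v) e n) ->
  eval_term F e (inst_term k v t) = eval_term F e' t.
Proof.
  intros He. induction t as [n|f ts IH] using term_nested_ind; simpl.
  - rewrite He. unfold inst_env. now destruct (n =? k), (n <? k).
  - rewrite map_map. f_equal. now apply map_ext_Forall.
Qed.

Lemma scons_inst_env (k : nat) (v : term) (d : D) (e e' : nat -> D) :
  (forall n, e' n = inst_env k (eval_term F e v) e n) ->
  forall n, scons d e' n =
            inst_env (S k) (eval_term F (scons d e) (shift_term 0 v)) (scons d e) n.
Proof.
  intros He [|n]; [reflexivity|].
  simpl. rewrite He, eval_shift_term0. unfold inst_env.
  change (S n <? S k) with (n <? k). simpl.
  destruct (n =? k) eqn:Hnk, (n <? k) eqn:Hlt; trivial.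
  apply Nat.eqb_neq in Hnk. apply Nat.ltb_ge in Hlt. destruct n; [lia | reflexivity].
Qed.

Lemma sat_inst (p : formula) : forall (k : nat) (v : term) (e e' : nat -> D),
  (forall n, e' n = inst_env k (eval_term F e v) e n) ->
  (sat F R e (inst k v p) <-> sat F R e' p).
Proof.
  induction p; intros k v e e' He; simpl;
    try rewrite (IHp k v e e' He); try rewrite (IHp1 k v e e' He), (IHp2 k v e e' He);
    try reflexivity.
  3-4: enough (Hd : forall d, sat F R (scons d e) (inst (S k) (shift_term 0 v) p) <->
                              sat F R (scons d e') p) by (now setoid_rewrite Hd);
       intros d; now apply IHp, scons_inst_env.
  - now rewrite !(eval_inst_term k v e e').
  - erewrite map_map, map_ext; [reflexivity|]. intros t. now apply eval_inst_term.
Qed.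

Lemma sat_at_const (e : nat -> D) (p : formula) (w : nat) :
  sat F R e (at_const p w) <-> sat F R (scons (F (Sym w false) []) e) p.
Proof. apply sat_inst. now intros [|n]. Qed.

Lemma sat_rsubst (m w : nat) (psi : formula) (M : D -> Prop) :
  (forall d e, sat (upd_fun F (Sym w false) d) R e psi <-> M d) ->
  forall (p : formula) (e : nat -> D),
  sat F R e (rsubst m w psi p) <-> sat F (upd_rel R (Sym m false) M) e p.
Proof.
  intros HM p. induction p; intros e; simpl; try setoid_rewrite IHp;
    try rewrite IHp1, IHp2; try reflexivity.
  unfold upd_rel. destruct ts as [|t [|t2 ts]]; simpl;
    destruct (sym_eqb r (Sym m false)); try reflexivity.
  now rewrite sat_csubst.
Qed.

End Semantics.

Lemma qdepth_csubst (w : nat) (p : formula) : forall v : term,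
  qdepth (csubst w v p) = qdepth p.
Proof. induction p; intros v; simpl; auto. Qed.

Lemma qdepth_rsubst (m w : nat) (psi p : formula) :
  qdepth (rsubst m w psi p) <= qdepth p + qdepth psi.
Proof.
  induction p; simpl; try lia.
  destruct ts as [|t [|t2 ts]]; simpl; try lia.
  destruct (sym_eqb r (Sym m false)); simpl; [rewrite qdepth_csubst|]; lia.
Qed.

Lemma wf_term_mono (okf okf' : sym -> nat -> Prop) (j k : nat) (t : term) :
  (forall f n, okf f n -> okf' f n) -> j <= k -> wf_term okf j t -> wf_term okf' k t.
Proof.
  intros Hok Hjk. induction t as [n|f ts IH] using term_nested_ind; simpl.
  - lia.
  - intros [Hf Hts]. split; auto. apply fold_and_Forall in Hts. apply fold_and_Forall.
    rewrite Forall_forall in IH, Hts |- *. auto.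
Qed.

Lemma wf_term_shift0 (okf : sym -> nat -> Prop) (k : nat) (u : term) :
  wf_term okf k u -> wf_term okf (S k) (shift_term 0 u).
Proof.
  induction u as [n|f ts IH] using term_nested_ind; simpl.
  - lia.
  - intros [Hf Hts]. rewrite length_map. split; trivial.
    apply fold_and_Forall in Hts. apply fold_and_Forall, Forall_map.
    rewrite Forall_forall in IH, Hts |- *. auto.
Qed.

Section WellFormedSubstitution.

Variables (okf okr okf' okr' : sym -> nat -> Prop) (w : nat).
Hypothesis Hokf :
  forall f n, okf f n -> sym_eqb f (Sym w false) && (n =? 0) = false -> okf' f n.
Hypothesis Hokr : forall r n, okr r n -> okr' r n.

Lemma wf_csubst_term (j k : nat) (v t : term) :
  j <= k -> wf_term okf' k v -> wf_term okf j t -> wf_term okf' k (csubst_term w v t).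
Proof.
  intros Hjk Hv. induction t as [n|f ts IH] using term_nested_ind; simpl.
  - lia.
  - intros [Hf Hts].
    destruct (sym_eqb f (Sym w false) && (length ts =? 0)) eqn:Hw; trivial.
    simpl. rewrite length_map. split; auto.
    apply fold_and_Forall in Hts. apply fold_and_Forall, Forall_map.
    rewrite Forall_forall in IH, Hts |- *. auto.
Qed.

Lemma wf_csubst (p : formula) : forall (j k : nat) (v : term),
  j <= k -> wf_term okf' k v -> wf_formula okf okr j p ->
  wf_formula okf' okr' k (csubst w v p).
Proof.
  induction p; intros j k v Hjk Hv; simpl; try (intros [H1 H2]; split); eauto.
  - eauto using wf_csubst_term.
  - eauto using wf_csubst_term.
  - rewrite length_map. auto.
  - apply fold_and_Forall in H2. apply fold_and_Forall, Forall_map.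
    rewrite Forall_forall in H2 |- *. eauto using wf_csubst_term.
  - intros H. apply (IHp (S j)); auto using wf_term_shift0 with arith.
  - intros H. apply (IHp (S j)); auto using wf_term_shift0 with arith.
Qed.

Lemma wf_rsubst (okfm okrm : sym -> nat -> Prop) (m : nat) (psi p : formula) :
  (forall f n, okfm f n -> okf' f n) ->
  (forall r n, okrm r n -> ~ (sym_eqb r (Sym m false) = true /\ n = 1) -> okr' r n) ->
  wf_formula okf okr 0 psi ->
  forall k, wf_formula okfm okrm k p -> wf_formula okf' okr' k (rsubst m w psi p).
Proof.
  intros Hokfm Hokrm Hpsi. induction p; intros k; simpl; try (intros [H1 H2]; split); auto.
  - eauto using wf_term_mono.
  - eauto using wf_term_mono.
  - intros [Hr Hts].
    assert (Hts' : fold_right and True (map (wf_term okf' k) ts)).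
    { apply fold_and_Forall in Hts. apply fold_and_Forall.
      rewrite Forall_forall in Hts |- *. eauto using wf_term_mono. }
    destruct ts as [|t [|t2 ts]].
    + split; trivial. apply Hokrm; trivial. intros [_ Hn]. discriminate.
    + destruct (sym_eqb r (Sym m false)) eqn:Hm.
      * apply (wf_csubst psi 0 k t); [lia | apply Hts' | exact Hpsi].
      * split; trivial. apply Hokrm; trivial. intros [Hm' _]. congruence.
    + split; trivial. apply Hokrm; trivial. intros [_ Hn]. discriminate.
Qed.

End WellFormedSubstitution.

Definition prime_sym (s : sym) : sym := Sym (sname s) true.
Definition swap_sym (s : sym) : sym := Sym (sname s) (negb (sprimed s)).

Section Interpretations.

Variables (D : Type) (F : sym -> list D -> D) (R : sym -> list D -> Prop) (e : nat -> D).

Lemma sat_prime (p : formula) :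
  sat F R e (prime p) <-> sat (fun s => F (prime_sym s)) (fun s => R (prime_sym s)) e p.
Proof. apply sat_rename. Qed.

Lemma sat_swap (p : formula) :
  sat F R e (swap p) <-> sat (fun s => F (swap_sym s)) (fun s => R (swap_sym s)) e p.
Proof. apply sat_rename. Qed.

End Interpretations.

Section Vocabularies.

Variables (V : vocab) (b : bool) (k : nat) (p : formula).
Hypothesis Hp : formula_over V b k p.

Lemma sat_agree_on_vocab (D : Type) (F F' : sym -> list D -> D)
    (R R' : sym -> list D -> Prop) (e : nat -> D) :
  (forall f ds, V (sname f) <> None -> (sprimed f = false \/ b = true) -> F f ds = F' f ds) ->
  (forall r ds, V (sname r) <> None -> (sprimed r = false \/ b = true) ->
                (R r ds <-> R' r ds)) ->
  (sat F R e p <-> sat F' R' e p).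
Proof.
  intros HF HR. apply (sat_agree (okf_of V b) (okr_of V b) D F F' R R') with (k := k);
    trivial.
  - intros f ds [Hf Hb]. apply HF; trivial. congruence.
  - intros r ds [Hr Hb]. apply HR; trivial. congruence.
Qed.

Lemma sat_upd_fun_fresh (w : nat) (c : bool) (D : Type) (F : sym -> list D -> D) R e d :
  V w = None -> (sat (upd_fun F (Sym w c) d) R e p <-> sat F R e p).
Proof.
  intros Hw. apply sat_agree_on_vocab; [|reflexivity].
  intros f ds Hf _. apply upd_fun_other, sym_eqb_sname_neq. congruence.
Qed.

Lemma sat_upd_rel_fresh (m : nat) (c : bool) (D : Type) F (R : sym -> list D -> Prop) e M :
  V m = None -> (sat F (upd_rel R (Sym m c) M) e p <-> sat F R e p).
Proof.
  intros Hm. apply sat_agree_on_vocab; [reflexivity|].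
  intros r ds Hr _. rewrite upd_rel_other; [reflexivity|]. apply sym_eqb_sname_neq. congruence.
Qed.

End Vocabularies.

Lemma sat_upd_fun_primed (V : vocab) (k : nat) (p : formula) (a : nat) (D : Type)
    (F : sym -> list D -> D) R e d :
  formula_over V false k p -> (sat (upd_fun F (Sym a true) d) R e p <-> sat F R e p).
Proof.
  intros Hp. apply (sat_agree_on_vocab V false k p Hp); [|reflexivity].
  intros f ds _ [Hf|Hf]; [|discriminate].
  apply upd_fun_other, sym_eqb_sprimed_neq. congruence.
Qed.

Lemma sat_upd_rel_primed (V : vocab) (k : nat) (p : formula) (a : nat) (D : Type) F
    (R : sym -> list D -> Prop) e M :
  formula_over V false k p -> (sat F (upd_rel R (Sym a true) M) e p <-> sat F R e p).
Proof.
  intros Hp. apply (sat_agree_on_vocab V false k p Hp); [reflexivity|].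
  intros r ds _ [Hr|Hr]; [|discriminate].
  rewrite upd_rel_other; [reflexivity|]. apply sym_eqb_sprimed_neq. congruence.
Qed.

Lemma sat_closed_env (V : vocab) (b : bool) (p : formula) (D : Type) F R (e e' : nat -> D) :
  formula_over V b 0 p -> (sat F R e p <-> sat F R e' p).
Proof.
  intros Hp. apply (sat_agree (okf_of V b) (okr_of V b) D F F R R) with (k := 0);
    [reflexivity | reflexivity | exact Hp | lia].
Qed.

Lemma swap_sym_involutive (s : sym) : swap_sym (swap_sym s) = s.
Proof. destruct s as [a c]. unfold swap_sym; simpl. now rewrite negb_involutive. Qed.

Lemma sat_swap_swap (V : vocab) (b : bool) (k : nat) (p : formula) (D : Type) F R
    (e : nat -> D) :
  formula_over V b k p ->
  (sat (fun s => F (swap_sym s)) (fun s => R (swap_sym s)) e (swap p) <-> sat F R e p).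
Proof.
  intros Hp. rewrite sat_swap.
  apply (sat_agree_on_vocab V b k p Hp); intros; now rewrite swap_sym_involutive.
Qed.

Lemma sat_prime_swap_unprimed (V : vocab) (k : nat) (p : formula) (D : Type) F R (e : nat -> D) :
  formula_over V false k p -> (sat F R e (prime p) <-> sat F R e (swap p)).
Proof.
  intros Hp. rewrite sat_prime, sat_swap.
  apply (sat_agree_on_vocab V false k p Hp);
    intros [a c] ds _ [Hc|Hc]; simpl in *; subst; try discriminate; reflexivity.
Qed.

Lemma safe_inv_Ind (S : vocab) (i t phi : formula) :
  closed_over S phi -> entails i phi -> entails (And phi t) (prime phi) ->
  safe_inductive_invariant S (Problem i t (Not phi)) phi.
Proof. intros Hphi Hi Ht. repeat split; trivial. intros D F R e H Hn. now apply Hn. Qed.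

Lemma safe_inv_Cons (S : vocab) (i t b phi xi : formula) :
  entails phi (Not b) ->
  safe_inductive_invariant S (Problem i t (Not phi)) xi ->
  safe_inductive_invariant S (Problem i t b) xi.
Proof.
  intros Hphi (Hxi & Hinit & Hcons & Hsafe). repeat split; trivial.
  intros D F R e Hx Hb. apply (Hsafe D F R e Hx). intros Hp. exact (Hphi D F R e Hp Hb).
Qed.

Lemma safe_inv_Inc (S : vocab) (i t b phi xi1 xi2 : formula) :
  safe_inductive_invariant S (Problem i t (Not phi)) xi1 ->
  safe_inductive_invariant S (Problem (And i phi) (And t (And phi (prime phi))) (And b phi)) xi2 ->
  safe_inductive_invariant S (Problem i t b) (And xi1 xi2).
Proof.
  intros (Hxi1 & Hinit1 & Hcons1 & Hsafe1) (Hxi2 & Hinit2 & Hcons2 & Hsafe2); simpl in *.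
  assert (Hphi : forall D F R (e : nat -> D), sat F R e xi1 -> sat F R e phi).
  { intros D F R e H. apply NNPP. exact (Hsafe1 D F R e H). }
  split; [now split|]. split; [|split].
  - intros D F R e Hi. assert (H1 := Hinit1 D F R e Hi).
    split; trivial. apply (Hinit2 D F R e). split; [exact Hi | exact (Hphi D F R e H1)].
  - intros D F R e [[H1 H2] Ht].
    assert (H1' := Hcons1 D F R e (conj H1 Ht)).
    split; trivial. apply (Hcons2 D F R e).
    split; [exact H2|]. split; [exact Ht|]. split; [exact (Hphi D F R e H1)|].
    apply sat_prime. apply sat_prime in H1'. exact (Hphi _ _ _ e H1').
  - intros D F R e [H1 H2] Hb. apply (Hsafe2 D F R e H2).
    split; [exact Hb | exact (Hphi D F R e H1)].
Qed.

Lemma safe_inv_Rev (S : vocab) (i t b xi : formula) :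
  closed_over2 S t ->
  safe_inductive_invariant S (Problem b (swap t) i) xi ->
  safe_inductive_invariant S (Problem i t b) (Not xi).
Proof.
  intros Ht (Hxi & Hinit & Hcons & Hsafe); simpl in *.
  split; [exact Hxi|]. split; [|split].
  - intros D F R e Hi Hx. exact (Hsafe D F R e Hx Hi).
  - intros D F R e [Hnx Ht0] Hx'. apply Hnx.
    set (Fs := fun s => F (swap_sym s)). set (Rs := fun s => R (swap_sym s)).
    assert (Hx : sat Fs Rs e xi)
      by now apply sat_swap, (sat_prime_swap_unprimed S 0 xi).
    assert (Hx's : sat Fs Rs e (prime xi)).
    { apply (Hcons D Fs Rs e). split; trivial. now apply (sat_swap_swap S true 0 t). }
    apply (sat_prime_swap_unprimed S 0 xi) in Hx's; trivial.
    now apply (sat_swap_swap S false 0 xi) in Hx's.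
  - intros D F R e Hnx Hb. exact (Hnx (Hinit D F R e Hb)).
Qed.

Section Prophecy.

Variables (S : vocab) (i t b phi xi psi : formula) (w m : nat).
Hypotheses (Hi : closed_over S i) (Ht : closed_over2 S t) (Hb : closed_over S b).
Hypotheses (Hw : S w = None) (Hm : S m = None) (Hphi : formula_over S false 1 phi).
Hypothesis Hxi :
  safe_inductive_invariant (vext S m (KRel 1)) (proph_sound (Problem i t b) m phi) xi.
Hypothesis Hpsi :
  safe_inductive_invariant (vext S w (KFun 0)) (proph_w (Problem i t b) w phi) psi.

Definition psi_pred {D : Type} (F : sym -> list D -> D) (R : sym -> list D -> Prop)
    (e : nat -> D) (d : D) : Prop :=
  sat (upd_fun F (Sym w false) d) R e psi.

Lemma sat_rsubst_psi (D : Type) F R (e : nat -> D) :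
  sat F R e (rsubst m w psi xi) <-> sat F (upd_rel R (Sym m false) (psi_pred F R e)) e xi.
Proof.
  apply sat_rsubst. intros d e'. unfold psi_pred.
  apply (sat_closed_env (vext S w (KFun 0)) false), Hpsi.
Qed.

Lemma closed_rsubst_psi : closed_over S (rsubst m w psi xi).
Proof.
  destruct Hxi as [Cxi _], Hpsi as [Cpsi _].
  unfold closed_over, formula_over, okf_of, okr_of, vext in *.
  eapply wf_rsubst; [| | | | exact Cpsi | exact Cxi].
  - intros [a c] n [Hs Hc] Hn; simpl in *. split; trivial.
    destruct (Nat.eqb_spec a w); trivial. subst. injection Hs as <-.
    destruct Hc as [->|]; [|discriminate].
    unfold sym_eqb in Hn; simpl in Hn. now rewrite Nat.eqb_refl in Hn.
  - intros [a c] n [Hs Hc]; simpl in *. split; trivial.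
    destruct (Nat.eqb_spec a w); [discriminate | trivial].
  - intros [a c] n [Hs Hc]; simpl in *. split; trivial.
    destruct (Nat.eqb_spec a m); [discriminate | trivial].
  - intros [a c] n [Hs Hc] Hn; simpl in *. split; trivial.
    destruct (Nat.eqb_spec a m); trivial. subst. injection Hs as <-.
    destruct Hc as [->|]; [|discriminate].
    exfalso. apply Hn. split; [apply sym_eqb_refl | reflexivity].
Qed.

Lemma sat_phi_at_witness (D : Type) F R (e : nat -> D) (d : D) (M : D -> Prop) :
  sat F (upd_rel R (Sym m false) M) (scons d e) phi ->
  sat (upd_fun F (Sym w false) d) R e (at_const phi w).
Proof.
  intros Hd. apply sat_at_const. rewrite upd_fun_same.
  apply (sat_upd_fun_fresh S false 1 phi Hphi); trivial.
  now apply (sat_upd_rel_fresh S false 1 phi Hphi) in Hd.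
Qed.

Lemma proph_initiation : entails i (rsubst m w psi xi).
Proof.
  destruct Hxi as (_ & Ixi & _), Hpsi as (_ & Ipsi & _).
  intros D F R e Hi0. apply sat_rsubst_psi, (Ixi D). split.
  - now apply (sat_upd_rel_fresh S false 0 i Hi).
  - intros d Hd. simpl. rewrite upd_rel_same. apply (Ipsi D). split.
    + now apply (sat_upd_fun_fresh S false 0 i Hi).
    + exact (sat_phi_at_witness D F R e d _ Hd).
Qed.

Lemma proph_safety : entails (rsubst m w psi xi) (Not b).
Proof.
  destruct Hxi as (_ & _ & _ & Sxi), Hpsi as (_ & _ & _ & Spsi).
  intros D F R e Hx Hb0. apply sat_rsubst_psi in Hx. apply (Sxi D F _ e Hx). split.
  - now apply (sat_upd_rel_fresh S false 0 b Hb).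
  - intros d Hd HM. simpl in HM. rewrite upd_rel_same in HM. apply (Spsi D _ R e HM). split.
    + now apply (sat_upd_fun_fresh S false 0 b Hb).
    + exact (sat_phi_at_witness D F R e d _ Hd).
Qed.

Lemma psi_pred_prime_step (D : Type) F R (e : nat -> D) (d : D) :
  sat F R e t -> psi_pred F R e d ->
  sat F R (scons d e) phi -> sat F R (scons d e) (prime phi) ->
  psi_pred (fun s => F (prime_sym s)) (fun s => R (prime_sym s)) e d.
Proof.
  destruct Hpsi as (Cpsi & _ & Tpsi & _).
  intros Ht0 HM Hphi0 Hphi0'.
  set (F2 := upd_fun (upd_fun F (Sym w false) d) (Sym w true) d).
  assert (HF2w : F2 (Sym w false) [] = d).
  { unfold F2. rewrite upd_fun_other by (apply sym_eqb_sprimed_neq; discriminate).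
    apply upd_fun_same. }
  assert (HF2w' : F2 (Sym w true) [] = d) by apply upd_fun_same.
  assert (Hpsi' : sat F2 R e (prime psi)).
  { apply (Tpsi D F2 R e). split; [|split; [|split; [|split]]].
    - now apply (sat_upd_fun_primed (vext S w (KFun 0)) 0 psi).
    - apply sat_at_const. rewrite HF2w.
      apply (sat_upd_fun_primed S 1 phi); trivial.
      now apply (sat_upd_fun_fresh S false 1 phi Hphi).
    - apply (sat_upd_fun_fresh S true 0 t Ht); trivial.
      now apply (sat_upd_fun_fresh S true 0 t Ht).
    - simpl. rewrite HF2w. apply upd_fun_same.
    - apply sat_prime, sat_at_const. cbn beta.
      change (prime_sym (Sym w false)) with (Sym w true). rewrite HF2w'.
      apply sat_prime in Hphi0'. revert Hphi0'.
      apply (sat_agree_on_vocab S false 1 phi Hphi); [|reflexivity].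
      intros f ds Hf _. unfold F2, prime_sym.
      rewrite !upd_fun_other by (apply sym_eqb_sname_neq; simpl; congruence).
      reflexivity. }
  apply sat_prime in Hpsi'. revert Hpsi'. unfold psi_pred.
  apply (sat_agree_on_vocab (vext S w (KFun 0)) false 0 psi Cpsi); [|reflexivity].
  intros [a c] ds _ [Hc|Hc]; [simpl in Hc; subst c|discriminate].
  unfold F2, upd_fun, sym_eqb, prime_sym; simpl.
  destruct (a =? w); reflexivity.
Qed.

Lemma proph_consecution :
  entails (And (rsubst m w psi xi) t) (prime (rsubst m w psi xi)).
Proof.
  destruct Hxi as (Cxi & _ & Txi & _).
  intros D F R e [Hx Ht0].
  set (Fp := fun s => F (prime_sym s)). set (Rp := fun s => R (prime_sym s)).
  set (R2 := upd_rel (upd_rel R (Sym m false) (psi_pred F R e))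
                     (Sym m true) (psi_pred Fp Rp e)).
  assert (Hx' : sat F R2 e (prime xi)).
  { apply (Txi D F R2 e). split; [|split].
    - apply (sat_upd_rel_primed (vext S m (KRel 1)) 0 xi); trivial.
      now apply sat_rsubst_psi.
    - apply (sat_upd_rel_fresh S true 0 t Ht); trivial.
      now apply (sat_upd_rel_fresh S true 0 t Ht).
    - intros d (HM & Hphi0 & Hphi0'). simpl in HM |- *. unfold R2 in HM |- *.
      rewrite upd_rel_other in HM by (apply sym_eqb_sprimed_neq; discriminate).
      rewrite upd_rel_same in HM |- *.
      apply psi_pred_prime_step; trivial.
      + apply (sat_upd_rel_primed S 1 phi) in Hphi0; trivial.
        now apply (sat_upd_rel_fresh S false 1 phi Hphi) in Hphi0.
      + apply sat_prime. apply sat_prime in Hphi0'. revert Hphi0'.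
        apply (sat_agree_on_vocab S false 1 phi Hphi); [reflexivity|].
        intros r ds Hr _. unfold R2, prime_sym.
        rewrite !upd_rel_other by (apply sym_eqb_sname_neq; simpl; congruence).
        reflexivity. }
  apply sat_prime, sat_rsubst_psi. apply sat_prime in Hx'. revert Hx'.
  apply (sat_agree_on_vocab (vext S m (KRel 1)) false 0 xi Cxi); [reflexivity|].
  intros [a c] ds _ [Hc|Hc]; [simpl in Hc; subst c|discriminate].
  unfold R2, Rp, upd_rel, sym_eqb, prime_sym; simpl.
  destruct (a =? m); simpl; [|reflexivity].
  destruct ds as [|d0 [|d1 ds]]; reflexivity.
Qed.

End Prophecy.

Lemma safe_inv_Proph (S : vocab) (i t b phi xi psi : formula) (w m : nat) :
  safety_problem S (Problem i t b) -> S w = None -> S m = None ->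
  formula_over S false 1 phi ->
  safe_inductive_invariant (vext S m (KRel 1)) (proph_sound (Problem i t b) m phi) xi ->
  safe_inductive_invariant (vext S w (KFun 0)) (proph_w (Problem i t b) w phi) psi ->
  safe_inductive_invariant S (Problem i t b) (rsubst m w psi xi).
Proof.
  intros (Hi & Ht & Hb) Hw Hm Hphi Hxi Hpsi.
  split; [|split; [|split]].
  - eapply closed_rsubst_psi; eassumption.
  - eapply proph_initiation; eassumption.
  - eapply proph_consecution; eassumption.
  - eapply proph_safety; eassumption.
Qed.

Lemma inv_pro_safe_inductive_invariant (PP : formula -> Prop) (S : vocab) (Pi : problem)
    (P : fbpi PP S Pi) :
  safe_inductive_invariant S Pi (inv_pro P).
Proof.
  induction P as [S i t phi Hsp HP Hi Ht | S i t b phi Hsp Hc Hent P1 IH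
    | S i t b phi Hsp Hc P1 IH1 P2 IH2 | S i t b Hsp P1 IH
    | S [i t b] w m phi Hsp Hw Hm Hphi Ps IHs Pw IHw]; simpl.
  - apply safe_inv_Ind; [apply Hsp | exact Hi | exact Ht].
  - eapply safe_inv_Cons; eassumption.
  - eapply safe_inv_Inc; eassumption.
  - apply safe_inv_Rev; [apply Hsp | exact IH].
  - eapply safe_inv_Proph; eassumption.
Qed.

Lemma qdepth_inv_pro (PP : formula -> Prop) (d : nat) :
  (forall phi, PP phi -> qdepth phi <= d) ->
  forall (S : vocab) (Pi : problem) (P : fbpi PP S Pi), qdepth (inv_pro P) <= count_ind P * d.
Proof.
  intros Hd S Pi P.
  induction P as [S i t phi Hsp HP | | | | S Pi w m phi Hsp Hw Hm Hphi Ps IHs Pw IHw]; simpl;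
    try rewrite Nat.mul_add_distr_r; try lia.
  - specialize (Hd phi HP). lia.
  - pose proof (qdepth_rsubst m w (inv_pro Pw) (inv_pro Ps)). lia.
Qed.

Theorem theorem5p6 (PP : formula -> Prop) (HPP : forall phi, PP phi -> closed phi)
    (S : vocab) (Pi : problem) (P : fbpi PP S Pi) :
  safe_inductive_invariant S Pi (inv_pro P) /\
  (forall n d : nat, count_ind P = n ->
     (forall phi, PP phi -> qdepth phi <= d) ->
     qdepth (inv_pro P) <= n * d).
Proof.
  split.
  - apply inv_pro_safe_inductive_invariant.
  - intros n d <- Hd. now apply qdepth_inv_pro.
Qed.
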